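(* For every $\alpha<1$ and $\lambda>0$ we have $\mathbb P_{\alpha,\lambda}(\text{percolation})=1$.
   Context: For a countable set $P\subseteq\mathbb R\times[0,\infty)$, $\Gamma(P)$ denotes the graph on vertex set $P$ in which distinct points $(x,y),(x',y')$ are adjacent iff $|x-x'|<e^{\frac12(y+y')}$. For $\alpha,\lambda>0$, $\mathcal P_{\alpha,\lambda}$ is a Poisson point process on $\mathbb R\times[0,\infty)$ with intensity function $\lambda e^{-\alpha y}$, $\mathbb P_{\alpha,\lambda}$ its law, and ''percolation'' is the event that $\Gamma(\mathcal P_{\alpha,\lambda})$ has an infinite connected component. *)

From HB Require Import structures.
From mathcomp Require Import all_boot all_order all_algebra.
From mathcomp Require Import all_classical all_reals all_analysis measurable_realfun.
Set Implicit Arguments. Unset Strict Implicit. Unset Printing Implicit Defensive.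
Import Order.TTheory GRing.Theory Num.Theory.
Import numFieldNormedType.Exports.
Local Open Scope classical_set_scope.
Local Open Scope ring_scope.

Definition upper_half {R : realType} : set (R * R) := [set p | 0 <= p.2].

Definition gamma_adj {R : realType} (P : set (R * R)) (p q : R * R) : Prop :=
  P p /\ P q /\ p <> q /\ `|p.1 - q.1| < expR ((p.2 + q.2) / 2).

Inductive gamma_reach {R : realType} (P : set (R * R)) (p : R * R) :
    R * R -> Prop :=
  | reach_refl : P p -> gamma_reach P p p
  | reach_step : forall q r, gamma_reach P p q -> gamma_adj P q r ->
      gamma_reach P p r.

Definition gamma_component {R : realType} (P : set (R * R)) (p : R * R) :
  set (R * R) := [set q | gamma_reach P p q].

Definition percolates {R : realType} (P : set (R * R)) : Prop :=
  exists2 p, P p & infinite_set (gamma_component P p).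

Definition intensity {R : realType} (alpha lambda : R) (A : set (R * R)) :
    \bar R :=
  (\int[(@lebesgue_measure R) \x (@lebesgue_measure R)]_(z in A `&` upper_half)
     (lambda * expR (- alpha * z.2))%:E)%E.

Definition count_in {R : realType} (S A : set (R * R)) : \bar R :=
  (\esum_(z in S `&` A) 1)%E.

Definition is_PPP {R : realType} {d : measure_display}
    {Omega : measurableType d} (Pr : probability Omega R)
    (alpha lambda : R) (X : Omega -> set (R * R)) : Prop :=
  [/\ forall w, X w `<=` upper_half,
      forall A : set (R * R), measurable A ->
        (intensity alpha lambda A < +oo)%E ->
        measurable_fun [set: Omega] ((fun w => count_in (X w) A) : Omega -> \bar R),
      forall (A : set (R * R)) (k : nat), measurable A ->
        (intensity alpha lambda A < +oo)%E ->
        Pr [set w | count_in (X w) A = k%:R%:E] =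
          (let m := fine (intensity alpha lambda A) in
           (m ^+ k * expR (- m) / k`!%:R)%:E)
    & forall (n : nat) (A : 'I_n -> set (R * R)) (k : 'I_n -> nat),
        (forall i, measurable (A i)) ->
        (forall i, (intensity alpha lambda (A i) < +oo)%E) ->
        (forall i j, i <> j -> A i `&` A j = set0) ->
        Pr (\bigcap_(i in [set: 'I_n]) [set w | count_in (X w) (A i) = (k i)%:R%:E])
          = (\prod_(i < n) Pr [set w | count_in (X w) (A i) = (k i)%:R%:E])%E].

From HB Require Import structures.
From mathcomp Require Import all_boot all_order all_algebra.
From mathcomp Require Import all_classical all_reals all_analysis measurable_realfun.
From mathcomp Require Import ring lra.
Set Implicit Arguments. Unset Strict Implicit. Unset Printing Implicit Defensive.
Import Order.TTheory GRing.Theory Num.Theory.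
Local Open Scope classical_set_scope.
Local Open Scope ring_scope.

(* Stack the boxes B_n = [0, e^(nh - h/2)) x [nh, nh + h) on top of each other.
   Any point of B_n is adjacent to any point of B_(n+1): their horizontal
   distance is below e^(nh + h/2), while their mean height is at least
   nh + h/2.  Hence if all but finitely many boxes are occupied, the occupying
   points form an infinite path.  The intensity measure of B_n is at least
   lambda h e^(-alpha (n+1) h) e^(nh - h/2), which for h = 1/(1 - alpha) is
   C e^n; so B_n is empty with probability e^(-C e^n) <= 1/(C 2^n), and
   Borel-Cantelli shows that almost surely only finitely many boxes are empty. *)

Lemma nneseries_lty_half (R : realType) (u : (\bar R)^nat) (r : R) :
  (forall n, 0 <= u n)%E -> (forall n, u n <= (r / (2 ^ n.+1)%:R)%:E)%E ->
  (\sum_(n <oo) u n < +oo)%E.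
Proof.
move=> u_ge0 u_le; apply: (@le_lt_trans _ _ r%:E); last exact: ltry.
have := @cvg_geometric_eseries_half R r 0; rewrite expr0 divr1 => /cvg_lim <- //.
by apply: lee_nneseries => n _; rewrite ?u_ge0 // addn1.
Qed.

Lemma ae_eventually_notin d (T : measurableType d) (R : realType)
    (mu : {measure set T -> \bar R}) (F : (set T)^nat) :
  (forall n, measurable (F n)) -> (\sum_(n <oo) mu (F n) < +oo)%E ->
  {ae mu, forall t, exists N, forall n, (N <= n)%N -> ~ F n t}.
Proof.
move=> mF sumF; exists (lim_sup_set F); split.
- by apply: bigcapT_measurable => N; apply: bigcup_measurable => n _; exact: mF.
- exact: lim_sup_set_cvg0.
move=> t /= Nt N _; apply: contrapT => notF; apply: Nt; exists N => n Nn Fnt.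
by apply: notF; exists n.
Qed.

Lemma expRN_le_inv (R : realType) (x : R) : 0 < x -> expR (- x) <= x^-1.
Proof.
move=> x_gt0; rewrite expRN lef_pV2 ?posrE ?expR_gt0 //.
by apply: le_trans (expR_ge1Dx x); rewrite lerDr.
Qed.

Lemma pow2_le_expR (R : realType) (n : nat) : 2 ^+ n <= expR (n%:R : R).
Proof.
rewrite -[n%:R]mulr1 expRM_natl lerXn2r ?nnegrE ?expR_ge0 //.
exact: expR_ge1Dx.
Qed.

Section poisson_void.
Context {R : realType} {d : measure_display} {Omega : measurableType d}.
Context {Pr : probability Omega R} {alpha lambda : R} {X : Omega -> set (R * R)}.
Hypothesis X_PPP : is_PPP Pr alpha lambda X.
Context {A : set (R * R)}.
Hypotheses (mA : measurable A) (A_lty : (intensity alpha lambda A < +oo)%E).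

Lemma measurable_void : measurable [set w | count_in (X w) A = 0%E].
Proof.
have [_ m_count _ _] := X_PPP.
have := m_count A mA A_lty measurableT [set 0%E] (emeasurable_set1 _).
by rewrite setTI.
Qed.

Lemma void_probability :
  Pr [set w | count_in (X w) A = 0%E]
  = (expR (- fine (intensity alpha lambda A)))%:E.
Proof.
have [_ _ law _] := X_PPP; have := law A 0%N mA A_lty.
by rewrite mulr0n /= expr0 mul1r fact0 divr1; apply.
Qed.

End poisson_void.

Section deterministic.
Context {R : realType}.
Implicit Types (S : set (R * R)) (p q : R * R) (h y : R).

Definition box h y : set (R * R) := `[0, expR (y - h / 2)[ `*` `[y, y + h[.

Lemma boxP h y p :
  box h y p <-> 0 <= p.1 < expR (y - h / 2) /\ y <= p.2 < y + h.
Proof. by rewrite /box /setX /= !in_itv. Qed.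

Lemma box_adj S h y p q : 0 < h -> S p -> S q ->
  box h y p -> box h (y + h) q -> gamma_adj S p q.
Proof.
move: p q => [x1 y1] [x2 y2] h_gt0 Sp Sq.
move=> /boxP /= [/andP[x1_ge0 x1_lt] /andP[y1_ge y1_lt]].
move=> /boxP /= [/andP[x2_ge0 x2_lt] /andP[y2_ge _]].
split=> //; split=> //; split; first by case=> _ y_eq; lra.
have w_le : expR (y - h / 2) <= expR (y + h - h / 2) by rewrite ler_expR; lra.
have w_adj : expR (y + h - h / 2) <= expR ((y1 + y2) / 2) by rewrite ler_expR; lra.
rewrite /= ltr_norml; apply/andP; split; lra.
Qed.

Lemma percolates_chain S (p : nat -> R * R) :
  injective p -> (forall k, gamma_adj S (p k) (p k.+1)) -> percolates S.
Proof.
move=> p_inj p_adj; have Sp0 : S (p 0%N) by have [] := p_adj 0%N.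
exists (p 0%N) => // fin_comp.
have reach k : gamma_component S (p 0%N) (p k).
  by elim: k => [|k IHk]; [exact: reach_refl | exact: reach_step IHk (p_adj k)].
apply: infinite_nat.
have -> : [set: nat] = p @^-1` gamma_component S (p 0%N).
  by apply/seteqP; split => // k _; exact: reach.
by apply: finite_preimage fin_comp => i j _ _ /p_inj.
Qed.

Lemma percolates_boxes S h N : 0 < h ->
  (forall n, (N <= n)%N -> exists2 p, S p & box h (n%:R * h) p) -> percolates S.
Proof.
move=> h_gt0 S_boxes.
have /choice[p p_box] : forall k, exists q, S q /\ box h ((N + k)%:R * h) q.
  by move=> k; have [q] := S_boxes (N + k)%N (leq_addr _ _); exists q.
have box_next k : box h ((N + k)%:R * h + h) (p k.+1).
  by have := (p_box k.+1).2; rewrite addnS -natr1 mulrDl mul1r.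
apply: (@percolates_chain _ p).
  have p2_lt k : (p k).2 < (p k.+1).2.
    have [_ /boxP[_ /andP[_ p_lt]]] := p_box k.
    by have /boxP[_ /andP[q_ge _]] := box_next k; exact: lt_le_trans q_ge.
  move=> i j pij; apply: (inc_inj (Order.NatMonotonyTheory.incnP p2_lt)).
  by rewrite /= pij.
move=> k; have [Sp pk] := p_box k.
exact: box_adj h_gt0 Sp (p_box k.+1).1 pk (box_next k).
Qed.

End deterministic.

Section box_intensity.
Variables (R : realType) (alpha lambda h y : R).
Hypotheses (alpha_ge0 : 0 <= alpha) (lambda_ge0 : 0 <= lambda).
Hypotheses (h_gt0 : 0 < h) (y_ge0 : 0 <= y).

Local Notation mu := ((@lebesgue_measure R) \x (@lebesgue_measure R))%E.

Lemma measurable_box : measurable (box h y).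
Proof. by apply: measurableX; exact: measurable_itv. Qed.

Lemma box_upper_half : box h y `&` upper_half = box h y.
Proof. by apply/setIidl => p /boxP[_ /andP[y_le _]]; exact: le_trans y_le. Qed.

Lemma product_measure_box : mu (box h y) = (expR (y - h / 2) * h)%:E.
Proof.
rewrite /box product_measure1E ?lebesgue_measure_itv /=; try exact: measurable_itv.
rewrite !lebesgue_measure_itv /= !lte_fin expR_gt0 ltrDl h_gt0 -!EFinD -EFinM.
by rewrite subr0 addrAC subrr add0r.
Qed.

(* Used through [//] for the measurability side conditions of [ge0_le_integral]. *)
Let measurable_density :
  measurable_fun (box h y) (fun z : R * R => (lambda * expR (- alpha * z.2))%:E).
Proof.
apply: measurableT_comp => //; apply: measurable_funM => //.
apply: measurableT_comp => //; apply: measurable_funM => //.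
exact: measurable_funTS measurable_snd.
Qed.

Lemma intensity_box_ge :
  ((lambda * expR (- alpha * (y + h)) * (expR (y - h / 2) * h))%:E
    <= intensity alpha lambda (box h y))%E.
Proof.
rewrite /intensity box_upper_half EFinM -product_measure_box.
rewrite -integral_cst; last exact: measurable_box.
apply: ge0_le_integral => //; first exact: measurable_box.
  by move=> z _; rewrite lee_fin mulr_ge0 ?expR_ge0.
move=> z /boxP[_ /andP[_ z_lt]]; rewrite lee_fin ler_wpM2l // ler_expR.
by rewrite !mulNr lerN2 ler_wpM2l // ltW.
Qed.

Lemma intensity_box_lty : (intensity alpha lambda (box h y) < +oo)%E.
Proof.
rewrite /intensity box_upper_half.
apply: (@le_lt_trans _ _ (\int[mu]_(z in box h y) lambda%:E)%E).
  apply: ge0_le_integral => //; first exact: measurable_box.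
    by move=> z _; rewrite lee_fin mulr_ge0 ?expR_ge0.
  move=> z /boxP[_ /andP[z_ge _]]; rewrite lee_fin ler_piMr // expR_le1.
  by rewrite mulNr oppr_le0 mulr_ge0 // (le_trans y_ge0).
rewrite integral_cst; last exact: measurable_box.
rewrite (_ : _ (box h y) = (expR (y - h / 2) * h)%:E) -?EFinM ?ltry //.
exact: product_measure_box.
Qed.

End box_intensity.

Section supercritical.
Context {R : realType}.
Variables (alpha lambda : R).
Hypotheses (alpha_gt0 : 0 < alpha) (alpha_lt1 : alpha < 1).
Hypothesis lambda_gt0 : 0 < lambda.

Let h : R := (1 - alpha)^-1.
Let C : R := lambda * h * expR (- (alpha * h) - h / 2).

Let h_gt0 : 0 < h. Proof. by rewrite invr_gt0 subr_gt0. Qed.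
Let C_gt0 : 0 < C. Proof. by rewrite !mulr_gt0 ?expR_gt0. Qed.

Lemma intensity_box_ge_exp n :
  ((C * expR n%:R)%:E <= intensity alpha lambda (box h (n%:R * h)))%E.
Proof.
have y_ge0 : 0 <= n%:R * h by rewrite mulr_ge0 // ltW.
have h_inv : h * (1 - alpha) = 1 by rewrite mulVf // subr_eq0 gt_eqF.
set a := - alpha * (n%:R * h + h); set b := n%:R * h - h / 2.
have exponent_split : a + b = - (alpha * h) - h / 2 + n%:R * (h * (1 - alpha)).
  by rewrite /a /b; ring.
have box_mass : lambda * expR a * (expR b * h) = C * expR n%:R.
  transitivity (lambda * h * (expR a * expR b)); first by ring.
  by rewrite -expRD exponent_split h_inv mulr1 expRD /C; ring.
rewrite -box_mass.
exact: intensity_box_ge (ltW alpha_gt0) (ltW lambda_gt0) h_gt0 y_ge0.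
Qed.

Let box_lty n : (intensity alpha lambda (box h (n%:R * h)) < +oo)%E.
Proof.
apply: intensity_box_lty (ltW alpha_gt0) (ltW lambda_gt0) h_gt0 _.
by rewrite mulr_ge0 // ltW.
Qed.

Lemma measurable_void_box d (Omega : measurableType d)
    (Pr : probability Omega R) (X : Omega -> set (R * R)) n :
  is_PPP Pr alpha lambda X ->
  measurable [set w | count_in (X w) (box h (n%:R * h)) = 0%E].
Proof.
move=> X_PPP; apply: (measurable_void X_PPP); first exact: measurable_box.
exact: box_lty.
Qed.

Lemma void_box_probability_le d (Omega : measurableType d)
    (Pr : probability Omega R) (X : Omega -> set (R * R)) n :
  is_PPP Pr alpha lambda X ->
  (Pr [set w | count_in (X w) (box h (n%:R * h)) = 0%E]
    <= ((2 / C) / (2 ^ n.+1)%:R)%:E)%E.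
Proof.
move=> X_PPP.
rewrite (void_probability X_PPP (measurable_box _ _) (box_lty n)) lee_fin.
set m := fine _.
have m_ge : C * 2 ^+ n <= m.
  have box_ge := intensity_box_ge_exp n.
  have box_ge0 : (0 <= intensity alpha lambda (box h (n%:R * h)))%E.
    by apply: le_trans box_ge; rewrite lee_fin mulr_ge0 ?expR_ge0 // ltW.
  rewrite -lee_fin /m fineK ?ge0_fin_numE //; apply: le_trans box_ge.
  by rewrite lee_fin ler_pM2l // pow2_le_expR.
have m_gt0 : 0 < m by apply: lt_le_trans m_ge; rewrite mulr_gt0 ?exprn_gt0.
apply: le_trans (expRN_le_inv m_gt0) _.
have -> : 2 / C / (2 ^ n.+1)%:R = (C * 2 ^+ n)^-1.
  by rewrite natrX exprS; field; rewrite expf_neq0 ?gt_eqF.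
by rewrite lef_pV2 // posrE mulr_gt0 ?exprn_gt0.
Qed.

End supercritical.

Theorem lemma2p11 (R : realType) (d : measure_display) (Omega : measurableType d)
    (Pr : probability Omega R) (alpha lambda : R)
    (X : Omega -> set (R * R)) :
  0 < alpha -> alpha < 1 -> 0 < lambda ->
  is_PPP Pr alpha lambda X ->
  {ae Pr, forall w, percolates (X w)}.
Proof.
move=> alpha_gt0 alpha_lt1 lambda_gt0 X_PPP.
set h := (1 - alpha)^-1; have h_gt0 : 0 < h by rewrite invr_gt0 subr_gt0.
pose void n := [set w | count_in (X w) (box h (n%:R * h)) = 0%E].
have void_sum : (\sum_(n <oo) Pr (void n) < +oo)%E.
  apply: nneseries_lty_half => n; first exact: measure_ge0.
  exact: (void_box_probability_le alpha_gt0 alpha_lt1 lambda_gt0 n X_PPP).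
have m_void n : measurable (void n).
  exact: (measurable_void_box alpha_gt0 alpha_lt1 lambda_gt0 n X_PPP).
apply: filterS (ae_eventually_notin m_void void_sum) => w [N w_nonvoid].
apply: (@percolates_boxes _ _ h N h_gt0) => n Nn.
apply: contrapT => no_point; apply: (w_nonvoid n Nn).
rewrite /void /= /count_in (_ : X w `&` _ = set0) ?esum_set0 //.
by apply/seteqP; split => // p [Xp p_box]; apply: no_point; exists p.
Qed.
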